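(* For every power bounded $T\in\mathcal{B}(\mathbb{C}^2)$ of class $C_{11}$, the Cesàro asymptotic limits $A_{T,C}$ and $A_{T^*,C}$ are invertible and $A_{T,C}^{-1}+A_{T^*,C}^{-1}=2I_2$.
   Context: For a power bounded matrix $T$, $A_{T,C}=\lim_{n\to\infty}\frac1n\sum_{j=1}^nT^{*j}T^j$. $\mathcal{H}_0(T)=\{x:\|T^nx\|\to0\}$; $T$ is of class $C_{11}$ if $\mathcal{H}_0(T)=\{0\}$ and $\mathcal{H}_0(T^* )=\{0\}$. *)

From Stdlib Require Import Reals.
Open Scope R_scope.

Record C := mkC { re : R; im : R }.
Definition C0 : C := mkC 0 0.
Definition C1 : C := mkC 1 0.
Definition Cadd (a b : C) : C := mkC (re a + re b) (im a + im b).
Definition Copp (a : C) : C := mkC (- re a) (- im a).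
Definition Cmul (a b : C) : C :=
  mkC (re a * re b - im a * im b) (re a * im b + im a * re b).
Definition Cconj (a : C) : C := mkC (re a) (- im a).
Definition Cmod (a : C) : R := sqrt (re a * re a + im a * im a).
Definition CofR (r : R) : C := mkC r 0.

Record Vec2 := mkV { v1 : C; v2 : C }.
Definition vnorm (x : Vec2) : R :=
  sqrt (Cmod (v1 x) * Cmod (v1 x) + Cmod (v2 x) * Cmod (v2 x)).
Definition V0 : Vec2 := mkV C0 C0.

Record Mat2 := mkM { m11 : C; m12 : C; m21 : C; m22 : C }.
Definition Mid : Mat2 := mkM C1 C0 C0 C1.
Definition Mzero : Mat2 := mkM C0 C0 C0 C0.
Definition Madd (A B : Mat2) : Mat2 :=
  mkM (Cadd (m11 A) (m11 B)) (Cadd (m12 A) (m12 B))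
      (Cadd (m21 A) (m21 B)) (Cadd (m22 A) (m22 B)).
Definition Mscale (c : C) (A : Mat2) : Mat2 :=
  mkM (Cmul c (m11 A)) (Cmul c (m12 A)) (Cmul c (m21 A)) (Cmul c (m22 A)).
Definition Mmul (A B : Mat2) : Mat2 :=
  mkM (Cadd (Cmul (m11 A) (m11 B)) (Cmul (m12 A) (m21 B)))
      (Cadd (Cmul (m11 A) (m12 B)) (Cmul (m12 A) (m22 B)))
      (Cadd (Cmul (m21 A) (m11 B)) (Cmul (m22 A) (m21 B)))
      (Cadd (Cmul (m21 A) (m12 B)) (Cmul (m22 A) (m22 B))).
Definition Madj (A : Mat2) : Mat2 :=
  mkM (Cconj (m11 A)) (Cconj (m21 A)) (Cconj (m12 A)) (Cconj (m22 A)).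
Fixpoint Mpow (A : Mat2) (n : nat) : Mat2 :=
  match n with O => Mid | S k => Mmul A (Mpow A k) end.
Definition Mapply (A : Mat2) (x : Vec2) : Vec2 :=
  mkV (Cadd (Cmul (m11 A) (v1 x)) (Cmul (m12 A) (v2 x)))
      (Cadd (Cmul (m21 A) (v1 x)) (Cmul (m22 A) (v2 x))).

(** T power bounded: sup_n ||T^n|| < oo (operator norm written out) *)
Definition power_bounded (T : Mat2) : Prop :=
  exists M : R, forall (n : nat) (x : Vec2), vnorm (Mapply (Mpow T n) x) <= M * vnorm x.

Definition in_H0 (T : Mat2) (x : Vec2) : Prop :=
  Un_cv (fun n => vnorm (Mapply (Mpow T n) x)) 0.

Definition class_C11 (T : Mat2) : Prop :=
  (forall x, in_H0 T x <-> x = V0) /\ (forall x, in_H0 (Madj T) x <-> x = V0).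

(** Convergence of matrices (finite dimension: entrywise = in norm) *)
Definition Mdist_entry (f : Mat2 -> C) (A B : Mat2) : R :=
  Cmod (Cadd (f A) (Copp (f B))).
Definition Mconv (S : nat -> Mat2) (A : Mat2) : Prop :=
  Un_cv (fun n => Mdist_entry m11 (S n) A) 0 /\
  Un_cv (fun n => Mdist_entry m12 (S n) A) 0 /\
  Un_cv (fun n => Mdist_entry m21 (S n) A) 0 /\
  Un_cv (fun n => Mdist_entry m22 (S n) A) 0.

Fixpoint cesaro_sum (T : Mat2) (n : nat) : Mat2 :=
  match n with
  | O => Mzero
  | S k => Madd (cesaro_sum T k) (Mmul (Mpow (Madj T) (S k)) (Mpow T (S k)))
  end.
Definition cesaro_mean (T : Mat2) (n : nat) : Mat2 :=
  Mscale (CofR (/ INR n)) (cesaro_sum T n).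

Definition is_cesaro_limit (T A : Mat2) : Prop := Mconv (cesaro_mean T) A.

Definition is_inverse (A B : Mat2) : Prop := Mmul A B = Mid /\ Mmul B A = Mid.

(* Power boundedness and H_0(T) = {0} put every eigenvalue of T on the unit circle and rule
   out a nontrivial Jordan block, since its powers grow linearly.  So either T = l I with
   |l| = 1, and both Cesaro limits are I, or T = a P + b Q with distinct unimodular a, b and
   complementary rank-one idempotents P, Q.  In the latter case
     T^*j T^j = P^*P + Q^*Q + (conj a b)^j P^*Q + (conj b a)^j Q^*P,
   and the geometric sums of conj a b <> 1 stay bounded, so A_{T,C} = P^*P + Q^*Q and likewise
   A_{T^*,C} = P P^* + Q Q^*.  A direct computation gives A B = B A = k I and A + B = 2 k I
   with k = ||P||_HS^2 > 0, whence A^-1 + B^-1 = (A + B) / k = 2 I. *)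

From Stdlib Require Import Reals Lra Lia Psatz Ring Field Classical.
Open Scope R_scope.

Lemma C_ext (a b : C) : re a = re b -> im a = im b -> a = b.
Proof. destruct a, b; simpl; intros; subst; reflexivity. Qed.

Definition Csub (a b : C) : C := Cadd a (Copp b).
Definition Cinv (a : C) : C :=
  mkC (re a / (re a * re a + im a * im a)) (- im a / (re a * re a + im a * im a)).
Definition Cdiv (a b : C) : C := Cmul a (Cinv b).

Lemma Cring_theory : ring_theory C0 C1 Cadd Cmul Csub Copp (@eq C).
Proof.
  constructor; intros; apply C_ext; destruct x; try destruct y; try destruct z;
    unfold Csub; simpl; ring.
Qed.
Add Ring Cring : Cring_theory.

Lemma C1_neq_C0 : C1 <> C0.
Proof. intro H. injection H. lra. Qed.

Lemma Cfield_theory : field_theory C0 C1 Cadd Cmul Csub Copp Cdiv Cinv (@eq C).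
Proof.
  constructor.
  - exact Cring_theory.
  - exact C1_neq_C0.
  - reflexivity.
  - intros [a b] H. assert (a * a + b * b <> 0).
    { intro H0. apply H. assert (a = 0) by nra. assert (b = 0) by nra. subst; reflexivity. }
    apply C_ext; simpl; field; auto.
Qed.
Add Field Cfield : Cfield_theory.

Lemma Cadd_comm a b : Cadd a b = Cadd b a.
Proof. ring. Qed.

Notation C2 := (Cadd C1 C1).

(* [field] presents nonzero side conditions on numeric constants in evaluated record form. *)
Ltac Cneq0 :=
  repeat split; try assumption; let E := fresh in intro E; injection E; intros; lra.

Lemma CofR_2 : CofR 2 = C2.
Proof. apply C_ext; simpl; ring. Qed.

Lemma Cconj_add a b : Cconj (Cadd a b) = Cadd (Cconj a) (Cconj b).
Proof. apply C_ext; simpl; ring. Qed.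
Lemma Cconj_mul a b : Cconj (Cmul a b) = Cmul (Cconj a) (Cconj b).
Proof. apply C_ext; simpl; ring. Qed.
Lemma Cconj_opp a : Cconj (Copp a) = Copp (Cconj a).
Proof. apply C_ext; simpl; ring. Qed.
Lemma Cconj_sub a b : Cconj (Csub a b) = Csub (Cconj a) (Cconj b).
Proof. apply C_ext; simpl; ring. Qed.
Lemma Cconj_C1 : Cconj C1 = C1.
Proof. apply C_ext; simpl; ring. Qed.
Lemma Cconj_invol a : Cconj (Cconj a) = a.
Proof. apply C_ext; simpl; ring. Qed.

Fixpoint Cpow (a : C) (n : nat) : C :=
  match n with O => C1 | S k => Cmul a (Cpow a k) end.

Lemma Cpow_mul a b n : Cmul (Cpow a n) (Cpow b n) = Cpow (Cmul a b) n.
Proof. induction n; simpl. ring. rewrite <- IHn. ring. Qed.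
Lemma Cpow_C1 n : Cpow C1 n = C1.
Proof. induction n; simpl. reflexivity. rewrite IHn. ring. Qed.

Lemma Cmod_ge0 a : 0 <= Cmod a.
Proof. apply sqrt_pos. Qed.

Lemma Cmod_sq a : Cmod a * Cmod a = re a * re a + im a * im a.
Proof. unfold Cmod. rewrite sqrt_sqrt; nra. Qed.

Lemma Cmod_mul a b : Cmod (Cmul a b) = Cmod a * Cmod b.
Proof.
  unfold Cmod; destruct a as [x y], b as [u v]; simpl.
  rewrite <- sqrt_mult by nra. f_equal. ring.
Qed.

Lemma Cmod_conj a : Cmod (Cconj a) = Cmod a.
Proof. unfold Cmod; destruct a; simpl. f_equal; ring. Qed.

Lemma Cmod_opp a : Cmod (Copp a) = Cmod a.
Proof. unfold Cmod; destruct a; simpl. f_equal; ring. Qed.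

Lemma Cmod_CofR r : Cmod (CofR r) = Rabs r.
Proof. unfold Cmod, CofR; simpl. rewrite <- sqrt_Rsqr_abs. unfold Rsqr. f_equal; ring. Qed.

Lemma Cmod_C1 : Cmod C1 = 1.
Proof. rewrite <- Rabs_R1, <- Cmod_CofR. reflexivity. Qed.

Lemma Cmod_pow a n : Cmod (Cpow a n) = Cmod a ^ n.
Proof. induction n; simpl. apply Cmod_C1. rewrite Cmod_mul, IHn. reflexivity. Qed.

Lemma Cmod_eq0 a : Cmod a = 0 -> a = C0.
Proof.
  intro H. assert (S := Cmod_sq a). rewrite H in S. destruct a as [x y]; simpl in *.
  apply C_ext; simpl; nra.
Qed.

Lemma Cmod_gt0 a : a <> C0 -> 0 < Cmod a.
Proof.
  intro H. destruct (Cmod_ge0 a) as [h|h]; auto.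
  symmetry in h. apply Cmod_eq0 in h. contradiction.
Qed.

Lemma Cmod_add a b : Cmod (Cadd a b) <= Cmod a + Cmod b.
Proof.
  assert (Ha := Cmod_ge0 a). assert (Hb := Cmod_ge0 b).
  assert (Sa := Cmod_sq a). assert (Sb := Cmod_sq b). assert (Sab := Cmod_sq (Cadd a b)).
  set (A := Cmod a) in *. set (B := Cmod b) in *.
  destruct a as [x y], b as [u v]; simpl in *.
  (* Cauchy-Schwarz [x u + y v <= |a| |b|], via Lagrange's identity *)
  assert (Hcs : x * u + y * v <= A * B).
  { assert (E : (A * B) * (A * B) - (x * u + y * v) * (x * u + y * v)
                = (x * v - y * u) * (x * v - y * u))
      by (replace ((A * B) * (A * B)) with ((A * A) * (B * B)) by ring; rewrite Sa, Sb; ring).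
    pose proof (Rle_0_sqr (x * v - y * u)).
    apply Rsqr_incr_0_var; [unfold Rsqr in *; lra | apply Rmult_le_pos; auto]. }
  apply Rsqr_incr_0_var; unfold Rsqr; nra.
Qed.

Lemma Cmod_sub_le a b : Cmod a - Cmod b <= Cmod (Cadd a b).
Proof.
  assert (H := Cmod_add (Cadd a b) (Copp b)). rewrite Cmod_opp in H.
  replace (Cadd (Cadd a b) (Copp b)) with a in H by ring. lra.
Qed.

Lemma Cconj_mul_unimodular a : Cmod a = 1 -> Cmul (Cconj a) a = C1.
Proof.
  intro H. assert (S := Cmod_sq a). rewrite H in S. destruct a; simpl in *.
  apply C_ext; simpl; nra.
Qed.

Lemma Csqrt_exists z : exists s, Cmul s s = z.
Proof.
  destruct z as [a b].
  set (r := sqrt (a * a + b * b)).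
  assert (Hr0 : 0 <= r) by apply sqrt_pos.
  assert (Hr2 : r * r = a * a + b * b) by (apply sqrt_sqrt; nra).
  assert (Hra : Rabs a <= r).
  { apply Rsqr_incr_0_var; auto. unfold Rsqr. rewrite Hr2, <- Rabs_mult, Rabs_pos_eq by nra. nra. }
  assert (H1 : 0 <= (r + a) / 2) by (pose proof (Rle_abs (- a)); rewrite Rabs_Ropp in *; lra).
  assert (H2 : 0 <= (r - a) / 2) by (pose proof (Rle_abs a); lra).
  set (x := sqrt ((r + a) / 2)). set (y := sqrt ((r - a) / 2)).
  assert (Hx : x * x = (r + a) / 2) by (apply sqrt_sqrt; auto).
  assert (Hy : y * y = (r - a) / 2) by (apply sqrt_sqrt; auto).
  assert (Hx0 : 0 <= x) by apply sqrt_pos. assert (Hy0 : 0 <= y) by apply sqrt_pos.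
  assert (Hxy : 2 * (x * y) = Rabs b).
  { assert (E : (2 * (x * y)) * (2 * (x * y)) = Rabs b * Rabs b).
    { replace ((2 * (x * y)) * (2 * (x * y))) with (4 * (x * x) * (y * y)) by ring.
      rewrite Hx, Hy, <- Rabs_mult, Rabs_pos_eq by nra. nra. }
    apply Rsqr_inj; [| apply Rabs_pos | exact E].
    apply Rmult_le_pos; [lra | apply Rmult_le_pos; auto]. }
  destruct (Rle_dec 0 b) as [Hb|Hb].
  - exists (mkC x y). rewrite Rabs_pos_eq in Hxy by auto. apply C_ext; simpl; lra.
  - exists (mkC x (- y)). rewrite Rabs_left in Hxy by lra. apply C_ext; simpl; lra.
Qed.

Lemma M_ext (A B : Mat2) :
  m11 A = m11 B -> m12 A = m12 B -> m21 A = m21 B -> m22 A = m22 B -> A = B.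
Proof. destruct A, B; simpl; intros; subst; reflexivity. Qed.

Ltac mring := repeat match goal with M : Mat2 |- _ => destruct M end;
  apply M_ext; simpl; ring.

Lemma Madj_mul A B : Madj (Mmul A B) = Mmul (Madj B) (Madj A).
Proof.
  destruct A, B; apply M_ext; simpl; rewrite ?Cconj_add, ?Cconj_mul; ring.
Qed.
Lemma Madj_invol A : Madj (Madj A) = A.
Proof. destruct A; apply M_ext; simpl; apply Cconj_invol. Qed.
Lemma Madj_Mid : Madj Mid = Mid.
Proof. apply M_ext; simpl; apply C_ext; simpl; ring. Qed.
Lemma Madj_Mzero : Madj Mzero = Mzero.
Proof. apply M_ext; simpl; apply C_ext; simpl; ring. Qed.
Lemma Madj_add A B : Madj (Madd A B) = Madd (Madj A) (Madj B).
Proof. destruct A, B; apply M_ext; simpl; apply Cconj_add. Qed.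
Lemma Madj_scale c A : Madj (Mscale c A) = Mscale (Cconj c) (Madj A).
Proof. destruct A; apply M_ext; simpl; apply Cconj_mul. Qed.

Lemma Madd_comm A B : Madd A B = Madd B A.
Proof. mring. Qed.
Lemma Mscale_add c A B : Mscale c (Madd A B) = Madd (Mscale c A) (Mscale c B).
Proof. mring. Qed.
Lemma Mscale_mul_r c A B : Mmul A (Mscale c B) = Mscale c (Mmul A B).
Proof. mring. Qed.
Lemma Mscale_mul_l c A B : Mmul (Mscale c A) B = Mscale c (Mmul A B).
Proof. mring. Qed.

Lemma Mmul_comb a b c d P Q R S :
  Mmul (Madd (Mscale a P) (Mscale b Q)) (Madd (Mscale c R) (Mscale d S)) =
  Madd (Madd (Mscale (Cmul a c) (Mmul P R)) (Mscale (Cmul a d) (Mmul P S)))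
       (Madd (Mscale (Cmul b c) (Mmul Q R)) (Mscale (Cmul b d) (Mmul Q S))).
Proof. mring. Qed.

Definition Vscale (c : C) (v : Vec2) : Vec2 := mkV (Cmul c (v1 v)) (Cmul c (v2 v)).

Lemma V_ext (a b : Vec2) : v1 a = v1 b -> v2 a = v2 b -> a = b.
Proof. destruct a, b; simpl; intros; subst; reflexivity. Qed.

Lemma Mapply_mul A B x : Mapply (Mmul A B) x = Mapply A (Mapply B x).
Proof. destruct A, B, x; apply V_ext; simpl; ring. Qed.

Lemma Mapply_scale A c x : Mapply A (Vscale c x) = Vscale c (Mapply A x).
Proof. destruct A, x; apply V_ext; simpl; ring. Qed.

Lemma Mzero_of_Mapply N : (forall u, Mapply N u = V0) -> N = Mzero.
Proof.
  intro H. pose proof (H (mkV C1 C0)) as E1. pose proof (H (mkV C0 C1)) as E2.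
  destruct N as [a b c d].
  pose proof (f_equal v1 E1) as F11; pose proof (f_equal v2 E1) as F21.
  pose proof (f_equal v1 E2) as F12; pose proof (f_equal v2 E2) as F22.
  simpl in F11, F21, F12, F22.
  apply M_ext; simpl.
  - rewrite <- F11; ring.
  - rewrite <- F12; ring.
  - rewrite <- F21; ring.
  - rewrite <- F22; ring.
Qed.

Lemma vnorm_scale c v : vnorm (Vscale c v) = Cmod c * vnorm v.
Proof.
  unfold vnorm; simpl. rewrite !Cmod_mul.
  replace (Cmod c * Cmod (v1 v) * (Cmod c * Cmod (v1 v))
           + Cmod c * Cmod (v2 v) * (Cmod c * Cmod (v2 v)))
    with ((Cmod c * Cmod c) * (Cmod (v1 v) * Cmod (v1 v) + Cmod (v2 v) * Cmod (v2 v)))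
    by ring.
  rewrite sqrt_mult_alt, sqrt_square; auto using Cmod_ge0.
  apply Rmult_le_pos; apply Cmod_ge0.
Qed.

Lemma Cmod_v1_le_vnorm v : Cmod (v1 v) <= vnorm v.
Proof.
  unfold vnorm. rewrite <- (sqrt_square (Cmod (v1 v))) at 1 by apply Cmod_ge0.
  apply sqrt_le_1_alt. pose proof (Cmod_ge0 (v2 v)). nra.
Qed.
Lemma Cmod_v2_le_vnorm v : Cmod (v2 v) <= vnorm v.
Proof.
  unfold vnorm. rewrite <- (sqrt_square (Cmod (v2 v))) at 1 by apply Cmod_ge0.
  apply sqrt_le_1_alt. pose proof (Cmod_ge0 (v1 v)). nra.
Qed.

Lemma vnorm_gt0 v : v <> V0 -> 0 < vnorm v.
Proof.
  intro H. destruct (Req_dec (Cmod (v1 v)) 0) as [H1|H1].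
  - destruct (Req_dec (Cmod (v2 v)) 0) as [H2|H2].
    + exfalso. apply H, V_ext; apply Cmod_eq0; assumption.
    + pose proof (Cmod_ge0 (v2 v)). pose proof (Cmod_v2_le_vnorm v). lra.
  - pose proof (Cmod_ge0 (v1 v)). pose proof (Cmod_v1_le_vnorm v). lra.
Qed.

Lemma Mpow_eigenvector T v l : Mapply T v = Vscale l v ->
  forall n, Mapply (Mpow T n) v = Vscale (Cpow l n) v.
Proof.
  intros H n. induction n; simpl.
  - destruct v; apply V_ext; simpl; ring.
  - rewrite Mapply_mul, IHn, Mapply_scale, H. destruct v; apply V_ext; simpl; ring.
Qed.

(* Powers of an eigenvalue of modulus < 1 push the eigenvector into H_0(T); powers of
   an eigenvalue of modulus > 1 contradict power boundedness. *)
Lemma eigenvalue_unimodular T v l : power_bounded T -> (forall x, in_H0 T x -> x = V0) ->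
  Mapply T v = Vscale l v -> v <> V0 -> Cmod l = 1.
Proof.
  intros [M HM] H0 Hv Hnz.
  assert (Hp := vnorm_gt0 v Hnz).
  assert (Hn : forall n, vnorm (Mapply (Mpow T n) v) = Cmod l ^ n * vnorm v).
  { intro n. rewrite (Mpow_eigenvector T v l Hv), vnorm_scale, Cmod_pow. reflexivity. }
  assert (Hl0 := Cmod_ge0 l).
  destruct (Rtotal_order (Cmod l) 1) as [Hlt|[Heq|Hgt]]; auto; exfalso.
  - apply Hnz, H0. intros eps Heps.
    destruct (pow_lt_1_zero (Cmod l)) with (y := eps / vnorm v) as [N HN].
    { rewrite Rabs_pos_eq; lra. }
    { apply Rdiv_lt_0_compat; lra. }
    exists N. intros n Hn'. unfold R_dist. rewrite Rminus_0_r, Hn.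
    specialize (HN n Hn'). rewrite Rabs_mult, (Rabs_pos_eq (vnorm v)) by lra.
    apply (Rmult_lt_compat_r (vnorm v)) in HN; auto.
    replace (eps / vnorm v * vnorm v) with eps in HN by (field; lra). exact HN.
  - destruct (Pow_x_infinity (Cmod l)) with (b := M + 1) as [N HN].
    { rewrite Rabs_pos_eq; lra. }
    specialize (HN N (le_n N)). specialize (HM N v). rewrite Hn in HM.
    rewrite Rabs_pos_eq in HN by (apply pow_le; lra).
    assert (M + 1 <= M) by (apply (Rmult_le_reg_r (vnorm v)); nra). lra.
Qed.

Lemma eigenvalue_unimodular_of_range T P l : power_bounded T ->
  (forall x, in_H0 T x -> x = V0) -> Mmul T P = Mscale l P -> P <> Mzero -> Cmod l = 1.
Proof.
  intros Hpb H0 HTP HP.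
  destruct (classic (exists u, Mapply P u <> V0)) as [[u Hu]|Hall].
  - apply (eigenvalue_unimodular T (Mapply P u)); auto.
    rewrite <- Mapply_mul, HTP. destruct P, u; apply V_ext; simpl; ring.
  - exfalso. apply HP, Mzero_of_Mapply. intro u.
    apply NNPP. intro Hu. apply Hall. exists u. exact Hu.
Qed.

Definition idem_pair (P Q : Mat2) : Prop :=
  Mmul P P = P /\ Mmul Q Q = Q /\ Mmul P Q = Mzero /\ Mmul Q P = Mzero /\ Madd P Q = Mid.

Lemma idem_pair_adj P Q : idem_pair P Q -> idem_pair (Madj P) (Madj Q).
Proof.
  intros [H1 [H2 [H3 [H4 H5]]]]. unfold idem_pair.
  rewrite <- !Madj_mul, H1, H2, H3, H4, Madj_Mzero, <- Madj_add, H5, Madj_Mid.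
  tauto.
Qed.

Lemma Mmul_spectral_l P Q a b : idem_pair P Q ->
  Mmul (Madd (Mscale a P) (Mscale b Q)) P = Mscale a P.
Proof.
  intros [H1 [_ [_ [H4 _]]]].
  transitivity (Madd (Mscale a (Mmul P P)) (Mscale b (Mmul Q P))); [mring|].
  rewrite H1, H4. mring.
Qed.

Lemma Mmul_spectral_r P Q a b : idem_pair P Q ->
  Mmul (Madd (Mscale a P) (Mscale b Q)) Q = Mscale b Q.
Proof.
  intros [_ [H2 [H3 _]]].
  transitivity (Madd (Mscale a (Mmul P Q)) (Mscale b (Mmul Q Q))); [mring|].
  rewrite H2, H3. mring.
Qed.

Lemma Mpow_spectral P Q a b : idem_pair P Q -> forall n,
  Mpow (Madd (Mscale a P) (Mscale b Q)) n = Madd (Mscale (Cpow a n) P) (Mscale (Cpow b n) Q).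
Proof.
  intros HPQ n. destruct HPQ as [H1 [H2 [H3 [H4 H5]]]]. induction n.
  - simpl. rewrite <- H5. mring.
  - simpl Mpow. rewrite IHn, Mmul_comb, H1, H2, H3, H4. simpl Cpow. mring.
Qed.

(* Every rank-one idempotent of C^2 is some [rproj p q r] with [q r = p - p^2]. *)
Definition rproj (p q r : C) : Mat2 := mkM p q r (Csub C1 p).
Definition cproj (p q r : C) : Mat2 := mkM (Csub C1 p) (Copp q) (Copp r) p.

Lemma idem_pair_rproj p q r : Cmul q r = Csub p (Cmul p p) -> idem_pair (rproj p q r) (cproj p q r).
Proof.
  intro H. unfold idem_pair, rproj, cproj.
  repeat split; apply M_ext; simpl; ring_simplify [H]; ring.
Qed.

Lemma rproj_neq0 p q r : rproj p q r <> Mzero.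
Proof.
  intro E. apply C1_neq_C0.
  transitivity (Cadd (m11 (rproj p q r)) (m22 (rproj p q r))); [unfold rproj; simpl; ring|].
  rewrite E. simpl. ring.
Qed.

Lemma cproj_neq0 p q r : cproj p q r <> Mzero.
Proof.
  intro E. apply C1_neq_C0.
  transitivity (Cadd (m11 (cproj p q r)) (m22 (cproj p q r))); [unfold cproj; simpl; ring|].
  rewrite E. simpl. ring.
Qed.

Fixpoint geom_sum (z : C) (n : nat) : C :=
  match n with O => C0 | S k => Cadd (geom_sum z k) (Cpow z (S k)) end.

Lemma geom_sum_mul z n : Cmul (geom_sum z n) (Csub z C1) = Csub (Cpow z (S n)) z.
Proof.
  induction n as [|n IHn]; cbn [geom_sum Cpow] in *; [ring|].
  transitivity (Cadd (Cmul (geom_sum z n) (Csub z C1)) (Cmul (Cmul z (Cpow z n)) (Csub z C1)));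
    [ring|].
  rewrite IHn. ring.
Qed.

Lemma geom_sum_bounded z : Cmod z = 1 -> z <> C1 ->
  exists K, forall n, Cmod (geom_sum z n) <= K.
Proof.
  intros Hz Hz1.
  assert (Hd : 0 < Cmod (Csub z C1)).
  { apply Cmod_gt0. intro H. apply Hz1.
    replace z with (Cadd (Csub z C1) C1) by ring. rewrite H. ring. }
  exists (2 / Cmod (Csub z C1)). intro n.
  apply (Rmult_le_reg_r (Cmod (Csub z C1))); auto.
  replace (2 / Cmod (Csub z C1) * Cmod (Csub z C1)) with 2 by (field; lra).
  rewrite <- Cmod_mul, geom_sum_mul.
  eapply Rle_trans; [apply Cmod_add|]. rewrite Cmod_opp, Cmod_pow, Hz, pow1. lra.
Qed.

Lemma Un_cv_le_inv_INR (f : nat -> R) (K : R) :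
  (forall n, (1 <= n)%nat -> 0 <= f n <= K / INR n) -> Un_cv f 0.
Proof.
  intros H eps Heps.
  destruct (INR_unbounded (Rabs K / eps)) as [N HN].
  exists (S N). intros n Hn. unfold R_dist. rewrite Rminus_0_r.
  destruct (H n ltac:(lia)) as [H0 H1]. rewrite Rabs_pos_eq by lra.
  assert (HNn : INR N <= INR n) by (apply le_INR; lia).
  assert (Hn0 : 0 < INR n) by (apply lt_0_INR; lia).
  apply Rle_lt_trans with (Rabs K / INR n).
  { eapply Rle_trans; [exact H1|].
    apply Rmult_le_compat_r; [left; apply Rinv_0_lt_compat; lra | apply Rle_abs]. }
  apply (Rmult_lt_reg_r (INR n)); auto.
  replace (Rabs K / INR n * INR n) with (Rabs K) by (field; lra).
  apply (Rmult_lt_reg_r (/ eps)); [apply Rinv_0_lt_compat; lra|].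
  replace (eps * INR n * / eps) with (INR n) by (field; lra). unfold Rdiv in HN. lra.
Qed.

Definition entry_linear (f : Mat2 -> C) : Prop :=
  (forall A B, f (Madd A B) = Cadd (f A) (f B)) /\ (forall c A, f (Mscale c A) = Cmul c (f A)).

Lemma Mconv_entrywise S X :
  (forall f, entry_linear f -> Un_cv (fun n => Mdist_entry f (S n) X) 0) -> Mconv S X.
Proof. intro H. repeat split; apply H; split; reflexivity. Qed.

Lemma Mconv_remainder_inv_INR S X Z :
  (forall n, (1 <= n)%nat -> S n = Madd X (Mscale (CofR (/ INR n)) (Z n))) ->
  (forall f, entry_linear f -> exists K, forall n, Cmod (f (Z n)) <= K) ->
  Mconv S X.
Proof.
  intros HS HZ. apply Mconv_entrywise. intros f [Hadd Hsc].
  destruct (HZ f (conj Hadd Hsc)) as [K HK].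
  apply Un_cv_le_inv_INR with K. intros n Hn.
  assert (Hn0 : 0 < INR n) by (apply lt_0_INR; lia).
  unfold Mdist_entry. rewrite HS, Hadd, Hsc by exact Hn.
  replace (Cadd (Cadd (f X) (Cmul (CofR (/ INR n)) (f (Z n)))) (Copp (f X)))
    with (Cmul (CofR (/ INR n)) (f (Z n))) by ring.
  split; [apply Cmod_ge0|].
  rewrite Cmod_mul, Cmod_CofR, Rabs_pos_eq by (left; apply Rinv_0_lt_compat; lra).
  unfold Rdiv. rewrite Rmult_comm.
  apply Rmult_le_compat_r; [left; apply Rinv_0_lt_compat; lra | apply HK].
Qed.

Lemma Cmod_entry_comb f c1 c2 Y W K1 K2 : entry_linear f ->
  Cmod c1 <= K1 -> Cmod c2 <= K2 ->
  Cmod (f (Madd (Mscale c1 Y) (Mscale c2 W))) <= K1 * Cmod (f Y) + K2 * Cmod (f W).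
Proof.
  intros [Hadd Hsc] H1 H2. rewrite Hadd, !Hsc.
  eapply Rle_trans; [apply Cmod_add|]. rewrite !Cmod_mul.
  pose proof (Cmod_ge0 (f Y)). pose proof (Cmod_ge0 (f W)).
  apply Rplus_le_compat; apply Rmult_le_compat_r; auto.
Qed.

Definition gram_l (P Q : Mat2) : Mat2 := Madd (Mmul (Madj P) P) (Mmul (Madj Q) Q).
Definition gram_r (P Q : Mat2) : Mat2 := Madd (Mmul P (Madj P)) (Mmul Q (Madj Q)).

Lemma adj_pow_mul_pow_spectral P Q a b j : idem_pair P Q -> Cmod a = 1 -> Cmod b = 1 ->
  Mmul (Mpow (Madj (Madd (Mscale a P) (Mscale b Q))) j) (Mpow (Madd (Mscale a P) (Mscale b Q)) j) =
  Madd (gram_l P Q) (Madd (Mscale (Cpow (Cmul (Cconj a) b) j) (Mmul (Madj P) Q))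
                          (Mscale (Cpow (Cmul (Cconj b) a) j) (Mmul (Madj Q) P))).
Proof.
  intros HPQ Ha Hb. rewrite Madj_add, !Madj_scale.
  rewrite (Mpow_spectral _ _ _ _ (idem_pair_adj P Q HPQ)), (Mpow_spectral _ _ _ _ HPQ).
  rewrite Mmul_comb, !Cpow_mul, !Cconj_mul_unimodular, Cpow_C1 by auto.
  unfold gram_l. generalize (Cpow (Cmul (Cconj a) b) j) (Cpow (Cmul (Cconj b) a) j).
  clear. intros. mring.
Qed.

Lemma cesaro_sum_spectral P Q a b n : idem_pair P Q -> Cmod a = 1 -> Cmod b = 1 ->
  cesaro_sum (Madd (Mscale a P) (Mscale b Q)) n =
  Madd (Mscale (CofR (INR n)) (gram_l P Q))
       (Madd (Mscale (geom_sum (Cmul (Cconj a) b) n) (Mmul (Madj P) Q))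
             (Mscale (geom_sum (Cmul (Cconj b) a) n) (Mmul (Madj Q) P))).
Proof.
  intros HPQ Ha Hb. induction n as [|n IHn].
  - simpl cesaro_sum. replace (CofR (INR 0)) with C0 by (apply C_ext; reflexivity).
    simpl geom_sum. unfold gram_l. clear. mring.
  - cbn [cesaro_sum]. rewrite IHn, adj_pow_mul_pow_spectral, S_INR by auto.
    replace (CofR (INR n + 1)) with (Cadd (CofR (INR n)) C1) by (apply C_ext; simpl; ring).
    cbn [geom_sum]. generalize (gram_l P Q) (CofR (INR n)).
    generalize (geom_sum (Cmul (Cconj a) b) n) (geom_sum (Cmul (Cconj b) a) n).
    generalize (Cpow (Cmul (Cconj a) b) (S n)) (Cpow (Cmul (Cconj b) a) (S n)).
    clear. intros. mring.
Qed.

Lemma geom_sum_conj_mul_bounded u v : Cmod u = 1 -> Cmod v = 1 -> u <> v ->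
  exists K, forall n, Cmod (geom_sum (Cmul (Cconj u) v) n) <= K.
Proof.
  intros Hu Hv Huv. apply geom_sum_bounded.
  - rewrite Cmod_mul, Cmod_conj, Hu, Hv. ring.
  - intro E. apply Huv. symmetry.
    transitivity (Cmul (Cmul (Cconj u) u) v); [rewrite (Cconj_mul_unimodular u Hu); ring|].
    transitivity (Cmul u (Cmul (Cconj u) v)); [ring|]. rewrite E. ring.
Qed.

Lemma cesaro_limit_spectral P Q a b : idem_pair P Q -> Cmod a = 1 -> Cmod b = 1 -> a <> b ->
  is_cesaro_limit (Madd (Mscale a P) (Mscale b Q)) (gram_l P Q).
Proof.
  intros HPQ Ha Hb Hab.
  destruct (geom_sum_conj_mul_bounded a b) as [K1 HK1]; auto.
  destruct (geom_sum_conj_mul_bounded b a) as [K2 HK2]; auto.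
  apply Mconv_remainder_inv_INR with
    (Z := fun n => Madd (Mscale (geom_sum (Cmul (Cconj a) b) n) (Mmul (Madj P) Q))
                        (Mscale (geom_sum (Cmul (Cconj b) a) n) (Mmul (Madj Q) P))).
  - intros n Hn. unfold cesaro_mean. rewrite cesaro_sum_spectral by auto.
    assert (Hinv : Cmul (CofR (/ INR n)) (CofR (INR n)) = C1).
    { assert (0 < INR n) by (apply lt_0_INR; lia). apply C_ext; simpl; field; lra. }
    revert Hinv. generalize (CofR (/ INR n)) (CofR (INR n)) (gram_l P Q).
    generalize (Madd (Mscale (geom_sum (Cmul (Cconj a) b) n) (Mmul (Madj P) Q))
                     (Mscale (geom_sum (Cmul (Cconj b) a) n) (Mmul (Madj Q) P))).
    clear. intros Z u v X Huv.
    transitivity (Madd (Mscale (Cmul u v) X) (Mscale u Z)); [mring|].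
    rewrite Huv. mring.
  - intros f Hf. exists (K1 * Cmod (f (Mmul (Madj P) Q)) + K2 * Cmod (f (Mmul (Madj Q) P))).
    intro n. apply Cmod_entry_comb; auto.
Qed.

Lemma cesaro_limit_adj_spectral P Q a b : idem_pair P Q -> Cmod a = 1 -> Cmod b = 1 -> a <> b ->
  is_cesaro_limit (Madj (Madd (Mscale a P) (Mscale b Q))) (gram_r P Q).
Proof.
  intros HPQ Ha Hb Hab.
  replace (gram_r P Q) with (gram_l (Madj P) (Madj Q))
    by (unfold gram_l, gram_r; rewrite !Madj_invol; reflexivity).
  rewrite Madj_add, !Madj_scale.
  apply cesaro_limit_spectral; try rewrite Cmod_conj; auto using idem_pair_adj.
  intro E. apply Hab. rewrite <- (Cconj_invol a), E. apply Cconj_invol.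
Qed.

Definition rproj_hs2 (p q r : C) : C :=
  Cadd (Cadd (Cmul (Cconj p) p) (Cmul (Cconj q) q))
       (Cadd (Cmul (Cconj r) r) (Cmul (Csub C1 (Cconj p)) (Csub C1 p))).

Lemma rproj_hs2_neq0 p q r : rproj_hs2 p q r <> C0.
Proof.
  intro H. assert (Hre : 0 < re (rproj_hs2 p q r))
    by (destruct p as [x y], q as [u v], r as [s t]; simpl; nra).
  rewrite H in Hre. simpl in Hre. lra.
Qed.

Lemma gram_rproj_relations p q r : Cmul q r = Csub p (Cmul p p) ->
  let A := gram_l (rproj p q r) (cproj p q r) in
  let B := gram_r (rproj p q r) (cproj p q r) in
  Mmul A B = Mscale (rproj_hs2 p q r) Mid /\ Mmul B A = Mscale (rproj_hs2 p q r) Mid /\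
  Madd A B = Mscale (Cmul (CofR 2) (rproj_hs2 p q r)) Mid.
Proof.
  intros H A B. unfold A, B, gram_l, gram_r, rproj, cproj, rproj_hs2.
  assert (Hc : Cmul (Cconj q) (Cconj r) = Csub (Cconj p) (Cmul (Cconj p) (Cconj p))).
  { rewrite <- Cconj_mul, H, Cconj_sub, Cconj_mul. reflexivity. }
  rewrite CofR_2.
  split; [|split]; apply M_ext; simpl;
    rewrite ?Cconj_add, ?Cconj_sub, ?Cconj_opp, ?Cconj_C1;
    revert Hc; generalize (Cconj p) (Cconj q) (Cconj r); intros pb qb rb Hc;
    ring_simplify [H Hc]; reflexivity.
Qed.

Lemma inverses_of_gram_relations A B k : k <> C0 ->
  Mmul A B = Mscale k Mid -> Mmul B A = Mscale k Mid ->
  Madd A B = Mscale (Cmul (CofR 2) k) Mid ->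
  exists Ainv Binv, is_inverse A Ainv /\ is_inverse B Binv /\ Madd Ainv Binv = Mscale (CofR 2) Mid.
Proof.
  intros Hk HAB HBA HApB.
  assert (Hunit : Mscale (Cinv k) (Mscale k Mid) = Mid)
    by (apply M_ext; simpl; field; exact Hk).
  exists (Mscale (Cinv k) B), (Mscale (Cinv k) A).
  repeat split; rewrite ?Mscale_mul_r, ?Mscale_mul_l, ?HAB, ?HBA; auto.
  rewrite <- Mscale_add, Madd_comm, HApB. apply M_ext; simpl; field; exact Hk.
Qed.

Lemma Mpow_scalar_plus_nilpotent l N : Mmul N N = Mzero -> forall n,
  Mpow (Madd (Mscale l Mid) N) (S n) =
  Madd (Mscale (Cpow l (S n)) Mid) (Mscale (Cmul (CofR (INR (S n))) (Cpow l n)) N).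
Proof.
  intros HN n. induction n as [|n IHn].
  - replace (CofR (INR 1)) with C1 by (apply C_ext; simpl; ring). cbn [Mpow Cpow]. mring.
  - change (Mpow ?T (S (S n))) with (Mmul T (Mpow T (S n))). rewrite IHn.
    set (c := Cmul (CofR (INR (S n))) (Cpow l n)).
    transitivity (Madd (Madd (Mscale (Cmul l (Cpow l (S n))) Mid)
                             (Mscale (Cadd (Cmul l c) (Cpow l (S n))) N))
                       (Mscale c (Mmul N N))); [mring|].
    rewrite HN. unfold c. rewrite (S_INR (S n)).
    replace (CofR (INR (S n) + 1)) with (Cadd (CofR (INR (S n))) C1)
      by (apply C_ext; simpl; ring).
    cbn [Cpow]. generalize (CofR (INR (S n))) (Cpow l n). clear. intros. mring.
Qed.

Lemma not_linearly_bounded c K : 0 < c -> ~ (forall n, INR (S n) * c <= K).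
Proof.
  intros Hc H. destruct (INR_unbounded (K / c)) as [N HN].
  specialize (H N). rewrite S_INR in H.
  assert (K / c * c < INR N * c) by (apply Rmult_lt_compat_r; lra).
  replace (K / c * c) with K in * by (field; lra). lra.
Qed.

Lemma linear_growth_bounded x y (al be : nat -> C) K :
  (forall n, Cmod (al n) = 1) -> (forall n, Cmod (be n) = 1) ->
  (forall n, Cmod (Cadd (Cmul (al n) x) (Cmul (Cmul (CofR (INR (S n))) (be n)) y)) <= K) ->
  y = C0.
Proof.
  intros Hal Hbe HK. apply NNPP. intro Hy.
  apply (not_linearly_bounded (Cmod y) (K + Cmod x)); [apply Cmod_gt0; exact Hy|].
  intro n. specialize (HK n).
  pose proof (Cmod_sub_le (Cmul (Cmul (CofR (INR (S n))) (be n)) y) (Cmul (al n) x)) as Hsub.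
  rewrite Cadd_comm in Hsub.
  rewrite !Cmod_mul, Hal, Hbe, Cmod_CofR, Rabs_pos_eq in Hsub by apply pos_INR.
  lra.
Qed.

(* A nontrivial Jordan block grows linearly, so power boundedness forbids it. *)
Lemma nilpotent_part_vanishes l N : power_bounded (Madd (Mscale l Mid) N) -> Cmod l = 1 ->
  Mmul N N = Mzero -> N = Mzero.
Proof.
  intros [M HM] Hl HN. apply Mzero_of_Mapply. intro u.
  set (T := Madd (Mscale l Mid) N) in HM.
  assert (HTu : forall n, Mapply (Mpow T (S n)) u =
    mkV (Cadd (Cmul (Cpow l (S n)) (v1 u)) (Cmul (Cmul (CofR (INR (S n))) (Cpow l n)) (v1 (Mapply N u))))
        (Cadd (Cmul (Cpow l (S n)) (v2 u)) (Cmul (Cmul (CofR (INR (S n))) (Cpow l n)) (v2 (Mapply N u))))).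
  { intro n. unfold T. rewrite Mpow_scalar_plus_nilpotent by exact HN.
    destruct N, u; apply V_ext; simpl; ring. }
  assert (Hpow : forall n, Cmod (Cpow l n) = 1) by (intro n; rewrite Cmod_pow, Hl; apply pow1).
  apply V_ext; simpl;
    [apply (linear_growth_bounded (v1 u) _ (fun n => Cpow l (S n)) (fun n => Cpow l n) (M * vnorm u))
    |apply (linear_growth_bounded (v2 u) _ (fun n => Cpow l (S n)) (fun n => Cpow l n) (M * vnorm u))];
    auto; intro n; eapply Rle_trans; try apply (HM (S n) u); rewrite HTu;
    [apply (Cmod_v1_le_vnorm (mkV _ _)) | apply (Cmod_v2_le_vnorm (mkV _ _))].
Qed.

Definition discriminant (T : Mat2) : C :=
  Cadd (Cmul (Csub (m11 T) (m22 T)) (Csub (m11 T) (m22 T))) (Cmul (Cmul C2 C2) (Cmul (m12 T) (m21 T))).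

Lemma simple_spectrum_decomposition T s : Cmul s s = discriminant T -> s <> C0 ->
  exists p q r a b, Cmul q r = Csub p (Cmul p p) /\ Csub a b = s /\
    T = Madd (Mscale a (rproj p q r)) (Mscale b (cproj p q r)).
Proof.
  intros Hs Hs0. destruct T as [x y z w]. unfold discriminant in Hs; cbn [m11 m12 m21 m22] in Hs.
  exists (Cdiv (Cadd (Csub x w) s) (Cmul C2 s)), (Cdiv y s), (Cdiv z s),
         (Cdiv (Cadd (Cadd x w) s) C2), (Cdiv (Csub (Cadd x w) s) C2).
  repeat split; [| | apply M_ext; unfold rproj, cproj; simpl ..];
    field [Hs]; Cneq0.
Qed.

Lemma double_eigenvalue_decomposition T : discriminant T = C0 ->
  exists l N, Mmul N N = Mzero /\ T = Madd (Mscale l Mid) N.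
Proof.
  intro Hd. destruct T as [x y z w]. unfold discriminant in Hd; cbn [m11 m12 m21 m22] in Hd.
  set (h := Cdiv (Csub x w) C2).
  assert (Hh : Cmul h h = Copp (Cmul y z)).
  { transitivity (Csub (Cmul (Cinv (Cmul C2 C2))
                             (Cadd (Cmul (Csub x w) (Csub x w)) (Cmul (Cmul C2 C2) (Cmul y z))))
                       (Cmul y z)); [unfold h; field; Cneq0|].
    rewrite Hd. ring. }
  exists (Cdiv (Cadd x w) C2), (mkM h y z (Copp h)).
  split; apply M_ext; simpl; [ring [Hh] | ring [Hh] | ring [Hh] | ring [Hh] |..];
    unfold h; field; Cneq0.
Qed.

Lemma Mid_neq0 : Mid <> Mzero.
Proof. intro E. apply C1_neq_C0. exact (f_equal m11 E). Qed.

Lemma power_bounded_spectral_cases T : power_bounded T -> (forall x, in_H0 T x -> x = V0) ->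
  (exists l, Cmod l = 1 /\ T = Mscale l Mid) \/
  (exists p q r a b, Cmul q r = Csub p (Cmul p p) /\ Cmod a = 1 /\ Cmod b = 1 /\ a <> b /\
     T = Madd (Mscale a (rproj p q r)) (Mscale b (cproj p q r))).
Proof.
  intros Hpb H0. destruct (Csqrt_exists (discriminant T)) as [s Hs].
  destruct (classic (s = C0)) as [Hs0|Hs0].
  - left. destruct (double_eigenvalue_decomposition T) as [l [N [HN HT]]].
    { rewrite <- Hs, Hs0. ring. }
    rewrite HT in Hpb, H0 |- *.
    assert (Hl : Cmod l = 1).
    { destruct (classic (N = Mzero)) as [HN0|HN0].
      - apply (eigenvalue_unimodular_of_range _ Mid l Hpb H0); [rewrite HN0; mring | apply Mid_neq0].
      - apply (eigenvalue_unimodular_of_range _ N l Hpb H0); [|exact HN0].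
        transitivity (Madd (Mscale l N) (Mmul N N)); [mring|]. rewrite HN. mring. }
    exists l. split; [exact Hl|].
    rewrite (nilpotent_part_vanishes l N Hpb Hl HN). mring.
  - right. destruct (simple_spectrum_decomposition T s Hs Hs0)
      as [p [q [r [a [b [Hqr [Hab HT]]]]]]].
    pose proof (idem_pair_rproj p q r Hqr) as HPQ.
    rewrite HT in Hpb, H0.
    exists p, q, r, a, b. repeat split; auto.
    + apply (eigenvalue_unimodular_of_range _ (rproj p q r) a Hpb H0).
      * apply Mmul_spectral_l; exact HPQ.
      * apply rproj_neq0.
    + apply (eigenvalue_unimodular_of_range _ (cproj p q r) b Hpb H0).
      * apply Mmul_spectral_r; exact HPQ.
      * apply cproj_neq0.
    + intro E. apply Hs0. rewrite <- Hab, E. ring.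
Qed.

Lemma idem_pair_Mid_Mzero : idem_pair Mid Mzero.
Proof. repeat split; mring. Qed.

Lemma cesaro_limit_unimodular_scalar l : Cmod l = 1 ->
  is_cesaro_limit (Mscale l Mid) Mid /\ is_cesaro_limit (Madj (Mscale l Mid)) Mid.
Proof.
  intro Hl.
  assert (Hl' : Cmod (Copp l) = 1) by (rewrite Cmod_opp; exact Hl).
  assert (Hll : l <> Copp l).
  { intro E. assert (Hl0 : l = C0) by (destruct l; injection E; intros; apply C_ext; simpl; lra).
    rewrite Hl0 in Hl. change C0 with (CofR 0) in Hl. rewrite Cmod_CofR, Rabs_R0 in Hl. lra. }
  (* [l Mid] is the spectral form [l Mid + (- l) Mzero], with formally distinct eigenvalues. *)
  assert (HT : Mscale l Mid = Madd (Mscale l Mid) (Mscale (Copp l) Mzero)) by mring.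
  assert (Hgl : gram_l Mid Mzero = Mid)
    by (unfold gram_l; rewrite Madj_Mid, Madj_Mzero; mring).
  assert (Hgr : gram_r Mid Mzero = Mid)
    by (unfold gram_r; rewrite Madj_Mid, Madj_Mzero; mring).
  pose proof (cesaro_limit_spectral _ _ _ _ idem_pair_Mid_Mzero Hl Hl' Hll) as HA.
  pose proof (cesaro_limit_adj_spectral _ _ _ _ idem_pair_Mid_Mzero Hl Hl' Hll) as HB.
  rewrite <- HT, Hgl in HA. rewrite <- HT, Hgr in HB. split; assumption.
Qed.

Theorem mainTheorem9 (T : Mat2) :
  power_bounded T -> class_C11 T ->
  exists A B Ainv Binv : Mat2,
    is_cesaro_limit T A /\ is_cesaro_limit (Madj T) B /\
    is_inverse A Ainv /\ is_inverse B Binv /\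
    Madd Ainv Binv = Mscale (CofR 2) Mid.
Proof.
  intros Hpb [H0 _].
  destruct (power_bounded_spectral_cases T Hpb (fun x => proj1 (H0 x)))
    as [[l [Hl ->]] | [p [q [r [a [b [Hqr [Ha [Hb [Hab ->]]]]]]]]]].
  - destruct (cesaro_limit_unimodular_scalar l Hl) as [HA HB].
    destruct (inverses_of_gram_relations Mid Mid C1 C1_neq_C0) as [Ainv [Binv Hinv]];
      try (rewrite ?CofR_2; mring).
    exists Mid, Mid, Ainv, Binv. tauto.
  - pose proof (idem_pair_rproj p q r Hqr) as HPQ.
    destruct (gram_rproj_relations p q r Hqr) as [HAB [HBA HApB]].
    destruct (inverses_of_gram_relations _ _ _ (rproj_hs2_neq0 p q r) HAB HBA HApB)
      as [Ainv [Binv Hinv]].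
    exists (gram_l (rproj p q r) (cproj p q r)), (gram_r (rproj p q r) (cproj p q r)), Ainv, Binv.
    split; [apply cesaro_limit_spectral | split; [apply cesaro_limit_adj_spectral|]]; auto.
Qed.
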